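(* Let $n\ge 2$. To each line of play of Planted Brussels Sprouts of order $n$ associate a sequence $(a_1,\dots,a_{n-1})$ as follows. Suppose the $k$-th move joins free arms with short labels $i$ and $j$ lying in a common region. In that region, just before the move, let $i^-$ and $j^-$ be the short labels of the free arms immediately counterclockwise from the arm $i$ and from the arm $j$, respectively. Set $a_k=\min(i^-,j^-)$. Then distinct lines of play give distinct sequences. Moreover, the set of sequences obtained is exactly the set of parking functions of length $n-1$.
   Context: Planted Brussels Sprouts of order $n$: start with a closed disk with $n$ marked points on its boundary circle, labeled $1,\dots,n$ in clockwise order. Attached to each marked point is an arm, a short segment pointing into the interior of the disk; these arms are free. A move consists of two steps. First, choose two free arms and join their free ends by a simple curve (an arc) in the disk that does not intersect any previously drawn arc or arm; the two joined arms cease to be free. Second, mark a point (a notch) on the arc, from which two new free arms emanate, one on each side of the arc. The game ends when no move is possible. A line of play is the full sequence of moves. Two lines of play are the same iff for each $k$ the arms joined at the $k$-th move coincide. Arms are identified by long labels: the original arm $i$ has long label $i$, and when arms with long labels $\alpha,\beta$ are joined, the new arms have long labels $(\alpha,\beta)$ and $(\beta,\alpha)$. Short labels: the original arm at point $i$ has short label $i$. If an arc joins arms with short labels $i$ and $j$, the two new arms receive short labels $i$ and $j$, placed so that, going clockwise around the notch, one sees the old arm $i$, the new arm $i$, the old arm $j$, and the new arm $j$. Regions and subgames: at any stage, the drawn arcs divide the disk into regions. The free arms in a region form a subgame, and any move joins two free arms of the same region. Within a region, the free arms carry distinct short labels and have a cyclic (clockwise) order around the region. ''Immediately counterclockwise''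 refers to the preceding free arm in this cyclic order. A parking function of length $n-1$ is a sequence $(a_1,\dots,a_{n-1})$ of integers in $\{1,\dots,n-1\}$ such that, if it is rearranged in weakly increasing order $a'_1\le\cdots\le a'_{n-1}$, then $a'_i\le i$ for all $i$. *)

From mathcomp Require Import all_boot.
Set Implicit Arguments. Unset Strict Implicit. Unset Printing Implicit Defensive.

(* Long labels: original arm i is [Leaf i]; when arms alpha, beta are joined
   the new arms have long labels (alpha,beta) = [Node 0 [:: alpha; beta]] and
   (beta,alpha) = [Node 0 [:: beta; alpha]]. *)
Definition arm := GenTree.tree nat.
Definition orig (i : nat) : arm := GenTree.Leaf i.
Definition joined (a b : arm) : arm := GenTree.Node 0 [:: a; b].

(* A free arm together with its short label. *)
Definition farm := (arm * nat)%type.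

(* A region: the list of its free arms in clockwise cyclic order
   (starting point arbitrary). A game state: the list of regions. *)
Definition region := seq farm.
Definition state := seq region.

Definition init (n : nat) : state := [:: [seq (orig i, i) | i <- iota 1 n]].

(* A move joins arms x (short label sx) and y (short label sy) of a region
   whose clockwise cyclic order is  x, A, y, B.  The arc splits the region into
   the part with clockwise order  (new arm (x,y), short label sx), A  and the
   part with clockwise order  (new arm (y,x), short label sy), B  (the new arm
   of short label sx lies at the former place of x, cf. the short-label rule).
   The free arm immediately counterclockwise from x is the last element of
   y :: B, the one immediately counterclockwise from y is the last element of
   x :: A; the recorded value is the minimum of their short labels. *)
Inductive play : state -> seq (arm * arm) -> seq nat -> Prop :=
| play_end (s : state) :
    all (fun R : region => size R <= 1) s -> play s [::] [::]
| play_step (s1 s2 : state) (k : nat) (x y : arm) (sx sy : nat)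
    (A B : region) (l : seq (arm * arm)) (a : seq nat) :
    play (s1 ++ ((joined x y, sx) :: A) :: ((joined y x, sy) :: B) :: s2) l a ->
    play (s1 ++ rot k ((x, sx) :: A ++ (y, sy) :: B) :: s2)
         ((x, y) :: l)
         (minn (last (y, sy) B).2 (last (x, sx) A).2 :: a).

(* Moves are unordered pairs of arms: two lines of play are the same iff at
   each step the same two arms are joined. *)
Definition same_move (p q : arm * arm) : bool :=
  (p == q) || (p == (q.2, q.1)).

Definition same_line (l1 l2 : seq (arm * arm)) : bool := all2 same_move l1 l2.

Definition parking_function (m : nat) (a : seq nat) : Prop :=
  [/\ size a = m,
      all (fun x => 1 <= x <= m) a &
      forall i : 'I_m, nth 0 (sort leq a) i <= i.+1].

(* The labels of the free arms of a region, read clockwise, increase cyclically,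
   and distinct regions carry disjoint label sets.  If a move in a region with
   label set C records v, the two new regions carry the labels of C in the window
   (v, u] and the other labels of C, where u is the larger of the two short labels
   counterclockwise from the joined arms.

   Say that b parks on C when |b| = |C| - 1 and, for every t, at most
   #{y in C | y > t} entries of b are >= t; relative to the ranks of the elements
   of C this is the parking-function condition.  A sequence is produced by the game
   from a state iff every region parks the entries of the sequence lying in its
   label set.  The induction step is a counting fact: for v in C, C parks v :: b
   iff, for some u in C above v, the window (v, u] and its complement in C park
   their parts of b; such a u is unique, namely the least u > v at which b has
   fewer entries in (v, u] than C has elements there.  Uniqueness of u makes the
   line of play unique, and for the initial region C = {1, ..., n} the condition
   is the parking-function condition itself. *)

From mathcomp Require Import all_boot zify.
Set Implicit Arguments. Unset Strict Implicit. Unset Printing Implicit Defensive.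

(** * Sequences up to rotation *)

Section Rotation.
Variable T : Type.
Implicit Types (s M N P Q : seq T) (r : rel T).

Lemma eq_cat_cat s1 s2 s3 s4 : s1 ++ s2 = s3 ++ s4 ->
  (exists w, s3 = s1 ++ w /\ s2 = w ++ s4) \/ (exists w, s1 = s3 ++ w /\ s4 = w ++ s2).
Proof.
elim: s1 s3 => [|x s1 IH] [|y s3] /=.
- by move=> ->; left; exists [::].
- by move=> ->; left; exists (y :: s3).
- by move=> <-; right; exists (x :: s1).
- by case=> -> /IH [[w [-> ->]] | [w [-> ->]]]; [left | right]; exists w.
Qed.

Definition rotated M N := exists M1 M2, M = M1 ++ M2 /\ N = M2 ++ M1.

Lemma rotated_refl M : rotated M M.
Proof. by exists [::], M; rewrite cats0. Qed.

Lemma rotated_sym M N : rotated M N -> rotated N M.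
Proof. by case=> [M1 [M2 [-> ->]]]; exists M2, M1. Qed.

Lemma rotated_trans M N O : rotated M N -> rotated N O -> rotated M O.
Proof.
case=> [M1 [M2 [-> ->]]] [N1 [N2 [E ->]]].
case: (eq_cat_cat E) => [[w [-> ->]] | [w [-> ->]]].
- by exists w, (N2 ++ M2); rewrite -!catA.
- by exists (M1 ++ N1), w; rewrite -!catA.
Qed.

Lemma rotated_catC P Q : rotated (P ++ Q) (Q ++ P).
Proof. by exists P, Q. Qed.

Lemma rotated_rot k M : rotated M (rot k M).
Proof. by rewrite -{1}(cat_take_drop k M); apply: rotated_catC. Qed.

Lemma rotatedP M N : rotated M N -> exists k, N = rot k M.
Proof. by case=> [M1 [M2 [-> ->]]]; exists (size M1); rewrite rot_size_cat. Qed.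

Definition csorted r M := exists2 N, rotated M N & pairwise r N.

Lemma csorted_rotated r M N : rotated M N -> csorted r M -> csorted r N.
Proof. by move=> MN [O MO sO]; exists O => //; apply: rotated_trans (rotated_sym MN) MO. Qed.

Lemma csorted_catl r P Q : csorted r (P ++ Q) -> csorted r P.
Proof.
case=> _ [M1 [M2 [E ->]]]; case: (eq_cat_cat E) => [[w [-> _]] | [w [-> ->]]].
- by rewrite !pairwise_cat => /and3P[_ _ /and3P[_ sP _]]; exists P => //; apply: rotated_refl.
- rewrite -catA !pairwise_cat allrel_catr => /and3P[/andP[_ r_w_M1] sw /and3P[_ _ sM1]].
  by exists (w ++ M1); [apply: rotated_catC | rewrite pairwise_cat r_w_M1 sw].
Qed.

Lemma csorted_catr r P Q : csorted r (P ++ Q) -> csorted r Q.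
Proof. by move/(csorted_rotated (rotated_catC P Q))/csorted_catl. Qed.

End Rotation.

Section RotationEq.
Variable T : eqType.
Implicit Types (M N P Q : seq T).

Lemma rotated_perm M N : rotated M N -> perm_eq M N.
Proof. by case=> [M1 [M2 [-> ->]]]; rewrite perm_catC. Qed.

Lemma rotated_split_eq P Q P' Q' : P != [::] -> Q != [::] -> uniq (P ++ Q) ->
  rotated (P ++ Q) (P' ++ Q') -> P =i P' -> P = P' /\ Q = Q'.
Proof.
move=> nzP nzQ uPQ rotPQ eqP'.
have sizeP : size P = size P'.
  have : uniq (P' ++ Q') by rewrite -(perm_uniq (rotated_perm rotPQ)).
  rewrite cat_uniq => /and3P[uP' _ _].
  by apply/perm_size/uniq_perm => //; move: uPQ; rewrite cat_uniq => /and3P[].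
have disjPQ z : z \in P -> z \in Q -> False.
  by move=> zP zQ; move: uPQ; rewrite cat_uniq => /and3P[_ /hasP[]]; exists z.
suff E : P ++ Q = P' ++ Q'.
  by move/eqP: E; rewrite eqseq_cat // => /andP[/eqP -> /eqP ->].
case: rotPQ => M1 [M2 [E E']].
case: (eq_cat_cat E) => [[w [eM1 eQ]] | [w [eP eM2]]].
- case: M2 E E' eQ => [|m M2] E E' eQ; first by rewrite E E' cats0.
  case: P' E' eqP' sizeP => [|p P'] E' eqP' sizeP; first by move: nzP; rewrite -size_eq0 sizeP.
  case: E' => ep _; exfalso; apply: (disjPQ m); last by rewrite eQ mem_cat mem_head orbT.
  by rewrite eqP' ep mem_head.
- case: M1 E E' eP => [|m M1] E E' eP; first by rewrite E E' cats0.
  case: Q uPQ E eM2 nzQ disjPQ => [//|q Q] _ _ eM2 _ disjPQ.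
  exfalso; apply: (disjPQ q); last exact: mem_head.
  rewrite eqP' -[P'](take_size_cat Q' (erefl _)) E' eM2 -catA take_cat -sizeP eP.
  rewrite size_cat /= ltnNge leq_addl /= addnK.
  by rewrite mem_cat inE eqxx orbT.
Qed.

End RotationEq.

Lemma rotated_map (T1 T2 : Type) (f : T1 -> T2) (s : seq T1) N :
  rotated (map f s) N -> exists2 s', rotated s s' & map f s' = N.
Proof.
case=> [M1 [M2 [E ->]]]; exists (rot (size M1) s); first exact: rotated_rot.
by rewrite map_rot E rot_size_cat.
Qed.

Lemma mem_mid (T : eqType) (s1 s2 : seq T) x y :
  (y \in s1 ++ x :: s2) = (y == x) || (y \in s1 ++ s2).
Proof. by rewrite !mem_cat inE orbCA. Qed.

Lemma mem_mid_self (T : eqType) (s1 s2 : seq T) x : x \in s1 ++ x :: s2.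
Proof. by rewrite mem_mid eqxx. Qed.

Lemma mem_mid_next (T : eqType) (s1 s2 : seq T) x y : y \in s1 ++ x :: y :: s2.
Proof. by rewrite !mem_mid eqxx orbT. Qed.

Lemma perm_mid (T : eqType) (s1 s2 : seq T) x : perm_eq (s1 ++ x :: s2) (x :: s1 ++ s2).
Proof. exact/permPl/(perm_catCA s1 [:: x] s2). Qed.

Lemma perm_swap_mid (T : eqType) (s1 s2 : seq T) x y :
  perm_eq (s1 ++ x :: y :: s2) (s1 ++ y :: x :: s2).
Proof. by rewrite perm_cat2l -[x :: _]cat1s -[y :: _]cat1s perm_catCA. Qed.

Lemma perm_filterC_cat (T : eqType) (a : pred T) (X Y C : seq T) :
  perm_eq (X ++ Y) C -> perm_eq X (filter a C) -> perm_eq Y (filter (predC a) C).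
Proof.
move=> XYC Xa; rewrite -(perm_cat2l X); apply: perm_trans XYC _.
by rewrite -(perm_filterC a C) perm_cat2r perm_sym.
Qed.

Lemma count_predIC (T : Type) (p q : pred T) s :
  count (predI p q) s + count (predI p (predC q)) s = count p s.
Proof. by elim: s => //= x s <-; case: (p x); case: (q x) => /=; lia. Qed.

Lemma count_predCI (T : Type) (p q : pred T) s :
  count (predI p q) s + count (predI (predC p) q) s = count q s.
Proof. by elim: s => //= x s <-; case: (p x); case: (q x) => /=; lia. Qed.

Lemma sorted_key_split (T : eqType) (f : T -> nat) (s : seq T) c :
  pairwise ltn (map f s) -> s = [seq e <- s | f e <= c] ++ [seq e <- s | c < f e].
Proof.
elim: s => //= e s IH /andP[]; rewrite all_map => /allP lt_e /IH {IH} eq_s.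
case: leqP => [_ | ce] /=; first by rewrite {1}eq_s.
rewrite (@eq_in_filter _ _ pred0) ?filter_pred0 ?(@eq_in_filter _ _ predT) ?filter_predT //.
- by move=> z /lt_e /= ez; apply: ltn_trans ce ez.
- by move=> z /lt_e /= ez; apply/negbTE; rewrite -ltnNge; apply: ltn_trans ce ez.
Qed.

Lemma pairwise_ltn_le_last (s : seq nat) x0 z :
  pairwise ltn s -> z \in s -> z <= last x0 s.
Proof.
case/lastP: s => // s y; rewrite pairwise_rcons last_rcons mem_rcons inE.
by case/andP=> /allP lt_s_y _ /predU1P[-> // | /lt_s_y /ltnW].
Qed.

Lemma mem_last0 (s : seq nat) : s != [::] -> last 0 s \in s.
Proof. by case: s => // x s _; apply: mem_last. Qed.

Lemma last_cat0 (s1 s2 : seq nat) : s2 != [::] -> last 0 (s1 ++ s2) = last 0 s2.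
Proof. by case: s2 => // z s2 _; rewrite last_cat. Qed.

Lemma last_filter_leq (s : seq nat) c : pairwise ltn s -> c \in s ->
  last 0 [seq z <- s | z <= c] = c.
Proof.
move=> sorted_s cs; set F := filter _ s.
have cF : c \in F by rewrite mem_filter leqnn.
have : last 0 F \in F by apply: mem_last0; apply/eqP => F0; rewrite F0 in cF.
rewrite mem_filter => /andP[lastc _].
by apply/eqP; rewrite eqn_leq lastc pairwise_ltn_le_last ?pairwise_filter.
Qed.

(** * Windows of cyclically sorted sequences *)

Definition window (v u z : nat) : bool := v < z <= u.

Lemma count_window_pred (v u : nat) s : v < u ->
  count (window v u) s = count (window v u.-1) s + count_mem u s.
Proof. by move=> vu; elim: s => //= z s ->; rewrite /window; case: eqP => [->|]; lia. Qed.

Lemma csorted_arc (P Q : seq nat) :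
  P != [::] -> csorted ltn (P ++ Q) -> last 0 P < last 0 Q ->
  exists P1 P2, [/\ P = P1 ++ P2, P2 != [::] & pairwise ltn (P2 ++ Q ++ P1)].
Proof.
move=> nzP [_ [M1 [M2 [E ->]]] sN] ltPQ.
have nzQ : Q != [::] by case: (Q) ltPQ.
case: (eq_cat_cat E) => {E} [[w [eM1 eQ]] | [w [eP eM2]]].
- case: M2 eQ sN => [|m M2] eQ sN; first by exists [::], P; rewrite eQ !cats0 -eM1.
  move: sN; rewrite eM1 pairwise_cat => /and3P[/allrelP lt _ _].
  have /= : ltn (last 0 Q) (last 0 P).
    by apply: lt; [rewrite eQ last_cat /=; apply: mem_last | rewrite mem_cat mem_last0].
  by rewrite ltnNge ltnW.
- case: w eP eM2 sN => [|w1 w] eP eM2 sN.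
  + move: sN; rewrite eM2 pairwise_cat => /and3P[/allrelP lt _ _].
    have /= : ltn (last 0 Q) (last 0 P).
      by apply: lt; [exact: mem_last0 | rewrite eP cats0 mem_last0 // -(cats0 M1) -eP].
    by rewrite ltnNge ltnW.
  + by exists M1, (w1 :: w); rewrite eM2 -catA in sN.
Qed.

Lemma csorted_window (P Q : seq nat) : P != [::] -> csorted ltn (P ++ Q) ->
  last 0 P < last 0 Q -> perm_eq Q (filter (window (last 0 P) (last 0 Q)) (P ++ Q)).
Proof.
move=> nzP csPQ ltPQ; have nzQ : Q != [::] by case: (Q) ltPQ.
have [P1 [P2 [eP nzP2 sN]]] := csorted_arc nzP csPQ ltPQ.
have lastP : last 0 P = last 0 P2 by rewrite eP last_cat; case: (P2) nzP2.
have permN : perm_eq (P ++ Q) (P2 ++ Q ++ P1) by rewrite eP -catA perm_catC -catA.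
rewrite perm_sym; apply: perm_trans (perm_filter _ permN) _.
move: sN; rewrite !pairwise_cat allrel_catr lastP.
case/and3P=> /andP[/allrelP ltP2Q _] sP2 /and3P[/allrelP ltQP1 sQ _].
rewrite !filter_cat; set W := window _ _.
have -> : filter W P2 = [::].
  apply/eqP/negPn; rewrite -has_filter; apply/hasPn => z zP2.
  by rewrite /W /window negb_and -leqNgt pairwise_ltn_le_last.
have -> : filter W P1 = [::].
  apply/eqP/negPn; rewrite -has_filter; apply/hasPn => z zP1.
  by have /= := ltQP1 _ _ (mem_last0 nzQ) zP1; rewrite /W /window; lia.
have -> : filter W Q = Q.
  apply/all_filterP/allP => z zQ; rewrite /W /window; apply/andP; split.
  - exact: ltP2Q (mem_last0 nzP2) zQ.
  - exact: pairwise_ltn_le_last.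
by rewrite cats0.
Qed.

Definition window_split (C X Y : seq nat) (v u : nat) :=
  perm_eq X (filter (window v u) C) /\ perm_eq Y (filter (predC (window v u)) C).

Lemma rotated_window_split_lt (P Q C : seq nat) : P != [::] -> rotated (P ++ Q) C ->
  csorted ltn C -> last 0 P < last 0 Q -> window_split C Q P (last 0 P) (last 0 Q).
Proof.
move=> nzP rotC csC ltPQ.
have permC := rotated_perm rotC.
have QW : perm_eq Q (filter (window (last 0 P) (last 0 Q)) C).
  apply: perm_trans (csorted_window nzP _ ltPQ) (perm_filter _ permC).
  exact: csorted_rotated (rotated_sym rotC) csC.
split=> //; apply: perm_filterC_cat QW.
by rewrite perm_catC.
Qed.

Lemma rotated_window_split (P Q C : seq nat) :
  P != [::] -> Q != [::] -> rotated (P ++ Q) C -> uniq C -> csorted ltn C ->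
  let v := minn (last 0 Q) (last 0 P) in let u := maxn (last 0 Q) (last 0 P) in
  [/\ v \in C, u \in C, v < u & window_split C P Q v u \/ window_split C Q P v u].
Proof.
move=> nzP nzQ rotC uC csC v u.
have memC z : (z \in C) = (z \in P ++ Q) by rewrite (perm_mem (rotated_perm rotC)).
have lastPC : last 0 P \in C by rewrite memC mem_cat mem_last0.
have lastQC : last 0 Q \in C by rewrite memC mem_cat mem_last0 ?orbT.
rewrite {}/v {}/u /minn /maxn; case: ltngtP => [ltQP | ltPQ | eqPQ].
- split=> //; left.
  apply: rotated_window_split_lt ltQP => //.
  exact: rotated_trans (rotated_catC Q P) rotC.
- by split=> //; right; apply: rotated_window_split_lt.
- move: uC; rewrite -(perm_uniq (rotated_perm rotC)) cat_uniq => /and3P[_ /hasP[]].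
  by exists (last 0 P); [rewrite -eqPQ|]; rewrite mem_last0.
Qed.

(** * Parking sequences *)

Definition parks (C b : seq nat) :=
  size b = (size C).-1 /\ forall t, count (leq t) b <= count (ltn t) C.

Section Parks.
Variables (C b : seq nat) (v : nat).

Lemma parks_merge u : v \in C -> u \in C -> v < u ->
  parks (filter (window v u) C) (filter (window v u) b) ->
  parks (filter (predC (window v u)) C) (filter (predC (window v u)) b) ->
  parks C (v :: b).
Proof.
move=> vC uC vu [sizeX parkX] [sizeY parkY]; set W := window v u in sizeX parkX sizeY parkY *.
have countX : 0 < count W C.
  by rewrite -has_count; apply/hasP; exists u; rewrite // /W /window vu /=.
have countY : 0 < count (predC W) C.
  by rewrite -has_count; apply/hasP; exists v; rewrite // /= /W /window ltnn.
rewrite !size_filter in sizeX sizeY; split.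
  by rewrite /= -(count_predC W b) -(count_predC W C) sizeX sizeY; lia.
move=> t; have := parkX t; have := parkY t; rewrite !count_filter /=.
rewrite -(count_predIC (leq t) W) -(count_predIC (ltn t) W).
case: (leqP t v) => [tv | vt]; last by lia.
have -> : count (predI (ltn t) W) C = count W C.
  by apply: eq_count => z; rewrite /= /W /window; lia.
have : count (predI (leq t) W) b <= count W b by apply: sub_count => z /andP[].
lia.
Qed.

Lemma first_deficient_mem u : uniq C -> v < u ->
  (forall w, w < u -> count (window v w) C <= count (window v w) b) ->
  count (window v u) b < count (window v u) C ->
  u \in C /\ count (window v u) b + 1 = count (window v u) C.
Proof.
move=> uniqC vu minu; have := minu u.-1.
rewrite !(count_window_pred _ vu) (count_uniq_mem u uniqC).
by case: (u \in C); lia.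
Qed.

Lemma parks_window u : uniq C -> v < u ->
  (forall w, w < u -> count (window v w) C <= count (window v w) b) ->
  count (window v u) b + 1 = count (window v u) C ->
  parks (filter (window v u) C) (filter (window v u) b).
Proof.
move=> uniqC vu minu countW; set W := window v u in countW *.
split=> [|t]; rewrite ?size_filter ?count_filter; first by lia.
case: (leqP t v) => [tv | vt].
  have -> : count (predI (ltn t) W) C = count W C.
    by apply: eq_count => z; rewrite /= /W /window; lia.
  have : count (predI (leq t) W) b <= count W b by apply: sub_count => z /andP[].
  lia.
case: (leqP t u) => [tu | ut]; last first.
  by rewrite (@eq_count _ _ pred0) ?count_pred0 // => z; rewrite /= /W /window; lia.
have eqb : count (predI (leq t) W) b + count (window v t.-1) b = count W b.
  rewrite -(count_predCI (leq t) W); congr (_ + _).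
  by apply: eq_count => z; rewrite /= /W /window; lia.
have eqC : count (predI (ltn t) W) C + count (window v t) C = count W C.
  rewrite -(count_predCI (ltn t) W); congr (_ + _).
  by apply: eq_count => z; rewrite /= /W /window; lia.
have := minu t.-1; rewrite (count_window_pred _ vt) (count_uniq_mem t uniqC) in eqC.
by case: (t \in C) eqC; lia.
Qed.

Lemma parks_window_compl u :
  count (window v u) b + 1 = count (window v u) C -> parks C (v :: b) ->
  parks (filter (predC (window v u)) C) (filter (predC (window v u)) b).
Proof.
move=> countW [sizeC parkC]; set W := window v u in countW *.
split=> [|t]; rewrite ?size_filter ?count_filter.
  by move: sizeC; rewrite /= -(count_predC W b) -(count_predC W C); lia.
case: (leqP t v) => [tv | vt].
  have := parkC t; rewrite /= tv -(count_predIC (leq t) W) -(count_predIC (ltn t) W).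
  have -> : count (predI (ltn t) W) C = count W C.
    by apply: eq_count => z; rewrite /= /W /window; lia.
  have -> : count (predI (leq t) W) b = count W b.
    by apply: eq_count => z; rewrite /= /W /window; lia.
  lia.
(* For t > v, the entries >= t outside (v, u] are the entries >= max t u.+1. *)
have /= := parkC (maxn t u.+1).
have : count (predI (leq t) (predC W)) b <= count (leq (maxn t u.+1)) b.
  by apply: sub_count => z; rewrite /= /W /window; lia.
have : count (ltn (maxn t u.+1)) C <= count (predI (ltn t) (predC W)) C.
  by apply: sub_count => z; rewrite /= /W /window; lia.
lia.
Qed.

Lemma parks_split u : uniq C -> v < u ->
  (forall w, w < u -> count (window v w) C <= count (window v w) b) ->
  count (window v u) b < count (window v u) C -> parks C (v :: b) ->
  [/\ u \in C, parks (filter (window v u) C) (filter (window v u) b)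
    & parks (filter (predC (window v u)) C) (filter (predC (window v u)) b)].
Proof.
move=> uniqC vu minu defu parkC.
have [uC countW] := first_deficient_mem uniqC vu minu defu.
by split; [| apply: parks_window | apply: parks_window_compl].
Qed.

Lemma parks_window_lt u1 u2 : uniq C -> {subset b <= C} ->
  u1 \in C -> u2 \in C -> v < u1 -> u1 < u2 ->
  parks (filter (window v u1) C) (filter (window v u1) b) ->
  ~ parks (filter (window v u2) C) (filter (window v u2) b).
Proof.
move=> uniqC bC u1C u2C vu1 u12 [size1 _] [size2 park2].
set W1 := window v u1 in size1; set W2 := window v u2 in size2 park2.
pose above_u1 t := (t \in C) && (u1 < t <= u2).
have [|ts /andP[tsC /andP[u1ts tsu2]] tsmin] := ex_minnP (P := above_u1).
  by exists u2; rewrite /above_u1 u2C u12 /=.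
have W1_below z : z \in C -> W1 z = predI (predC (leq ts)) W2 z.
  by move=> zC; have := tsmin z; rewrite /above_u1 /= /W1 /W2 /window zC /=; lia.
have countW1 : 0 < count W1 C.
  by rewrite -has_count; apply/hasP; exists u1; rewrite // /W1 /window vu1 /=.
rewrite !size_filter in size1 size2.
have eqb : count (predI (leq ts) W2) b + count W1 b = count W2 b.
  rewrite -(count_predCI (leq ts) W2); congr (_ + _).
  by apply: eq_in_count => z /bC /W1_below.
have eqC : count (predI (ltn ts) W2) C + (count W1 C + 1) = count W2 C.
  rewrite -(count_predCI (ltn ts) W2); congr (_ + _).
  have -> : count (predI (predC (ltn ts)) W2) C = count (window v ts) C.
    by apply: eq_count => z; rewrite /= /W2 /window; lia.
  rewrite (count_window_pred _ (ltn_trans vu1 u1ts)) (count_uniq_mem ts uniqC) tsC.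
  congr (_ + _); apply: eq_in_count => z zC.
  by have := tsmin z; rewrite /above_u1 /= /W1 /window zC /=; lia.
(* The entries of b in (v, u2] that are >= ts number #(C in (v, u2]) - #(C in (v, u1]),
   one more than the elements of C in (v, u2] above ts. *)
by have := park2 ts; rewrite !count_filter; lia.
Qed.

Lemma parks_window_uniq u1 u2 : uniq C -> {subset b <= C} ->
  u1 \in C -> u2 \in C -> v < u1 -> v < u2 ->
  parks (filter (window v u1) C) (filter (window v u1) b) ->
  parks (filter (window v u2) C) (filter (window v u2) b) -> u1 = u2.
Proof.
move=> uniqC bC u1C u2C vu1 vu2 park1 park2.
case: (ltngtP u1 u2) => // [u12 | u21]; exfalso.
- exact: (parks_window_lt uniqC bC u1C u2C vu1 u12 park1 park2).
- exact: (parks_window_lt uniqC bC u2C u1C vu2 u21 park2 park1).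
Qed.

Lemma parks_first_deficient : parks C (v :: b) ->
  exists u, [/\ v < u, count (window v u) b < count (window v u) C
    & forall w, w < u -> count (window v w) C <= count (window v w) b].
Proof.
case=> _ parkC.
pose deficient u := (v < u) && (count (window v u) b < count (window v u) C).
have [|u /andP[vu defu] umin] := ex_minnP (P := deficient).
  pose M := maxn v.+1 (\max_(z <- C) z); exists M; rewrite /deficient leq_maxl /=.
  have -> : count (window v M) C = count (ltn v) C.
    apply: eq_in_count => z zC; have : z <= \max_(z <- C) z := leq_bigmax_seq z zC isT.
    by rewrite /= /window /M; lia.
  have : count (window v M) b <= count (leq v) b by apply: sub_count => z; rewrite /= /window; lia.
  by have /= := parkC v; rewrite leqnn; lia.
exists u; split=> // w wu; case: (leqP w v) => [wv | vw].
  by rewrite (@eq_count _ _ pred0) ?count_pred0 // => z; rewrite /= /window; lia.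
by rewrite leqNgt; apply/negP => defw; have := umin w; rewrite /deficient vw defw; lia.
Qed.

End Parks.

Lemma sorted_nth_leq (s : seq nat) i c : sorted leq s -> i < size s ->
  (nth 0 s i <= c) = (i < count (fun x => x <= c) s).
Proof.
elim: s i => [//|x s IH] i /= sorted_xs lt_is.
have s_ge_x : all (leq x) s := order_path_min leq_trans sorted_xs.
have [xc | cx] := leqP x c.
  by case: i lt_is => [|i] /= lt_is; rewrite ?xc // IH ?(path_sorted sorted_xs).
have -> : count (fun x => x <= c) s = 0.
  by apply/eqP; rewrite -leqn0 leqNgt -has_count; apply/hasPn => z /(allP s_ge_x) /=; lia.
rewrite leqNgt (leq_trans cx) //; case: i lt_is => //= i lt_is.
by rewrite (allP s_ge_x) // mem_nth.
Qed.

Lemma count_leq_ltn (a : seq nat) t :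
  count (fun x => x <= t) a + count (leq t.+1) a = size a.
Proof.
rewrite -(count_predC (fun x => x <= t)); congr (_ + _).
by apply: eq_count => x /=; lia.
Qed.

Lemma parking_function_count m a : all (leq 1) a ->
  parking_function m a <-> size a = m /\ forall t, count (leq t) a <= m.+1 - t.
Proof.
move=> a_pos; have sort_le := sort_sorted leq_total a.
have count_sort c : count (fun x => x <= c) (sort leq a) = count (fun x => x <= c) a.
  by apply/permP; rewrite perm_sort.
split=> [[size_a /allP a_le_m nth_a] | [size_a count_a]].
  split=> // t; case: (leqP t 1) => [t1 | t2].
    by rewrite -size_a (leq_trans (count_size _ _)) //; lia.
  case: (leqP t m.+1) => [tm | mt]; last first.
    by rewrite (@eq_in_count _ _ pred0) ?count_pred0 // => x /a_le_m /=; lia.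
  case: t t2 tm => [|[|i]] // _ tm.
  have := nth_a (Ordinal (_ : i < m)); rewrite /= sorted_nth_leq ?size_sort ?size_a; try lia.
  by rewrite count_sort; have := count_leq_ltn a i.+1; rewrite size_a; lia.
split=> //.
  apply/allP => x xa; rewrite (allP a_pos) //=.
  have : ~~ has (leq m.+1) a by rewrite has_count -leqNgt -(subnn m.+1) count_a.
  by move/hasPn/(_ x xa) => /=; lia.
move=> i; rewrite sorted_nth_leq ?size_sort ?size_a // count_sort.
by have := count_leq_ltn a i.+1; have := count_a i.+2; have := ltn_ord i; lia.
Qed.

Lemma count_ltn_iota n t : count (ltn t) (iota 1 n) = n - t.
Proof. by elim: n => // n IH; rewrite -[n.+1]addn1 iotaD count_cat IH /=; lia. Qed.

Lemma parks_iota m a : all (leq 1) a -> parks (iota 1 m.+1) a <-> parking_function m a.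
Proof.
move=> a_pos; rewrite parking_function_count // /parks size_iota.
by split=> -[size_a count_a]; split=> // t; rewrite ?count_ltn_iota // -count_ltn_iota.
Qed.

(** * Regions and game states *)

Definition labels (R : region) : seq nat := map snd R.

Lemma last_snd (e : farm) (D : region) : (last e D).2 = last 0 (labels (e :: D)).
Proof. by rewrite /= -(last_map snd). Qed.

Lemma labels_filter (p : pred nat) (D : region) :
  labels [seq e <- D | p e.2] = [seq z <- labels D | p z].
Proof. by rewrite /labels; elim: D => //= e D IH; case: (p e.2); rewrite /= IH. Qed.

Lemma labels_inj (R : region) : uniq (labels R) -> {in R &, injective snd}.
Proof.
elim: R => //= e R IH /andP[eR uR] e1 e2; rewrite !inE.
case/predU1P=> [-> | e1R] /predU1P[-> | e2R] // E.
- by move: eR; rewrite E map_f.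
- by move: eR; rewrite -E map_f.
- exact: IH.
Qed.

Lemma rotated_arcs_eq (P Q P' Q' : region) : P != [::] -> Q != [::] ->
  uniq (labels (P ++ Q)) -> rotated (P ++ Q) (P' ++ Q') -> labels P =i labels P' ->
  P = P' /\ Q = Q'.
Proof.
move=> nzP nzQ uPQ rotPQ eqP'.
have memPQ : P' ++ Q' =i P ++ Q by apply: perm_mem; rewrite perm_sym rotated_perm.
have sub (X Y : region) : {subset X <= P ++ Q} -> {subset Y <= P ++ Q} ->
    labels X =i labels Y -> {subset X <= Y}.
  move=> sX sY XY z zX; have /mapP[z' z'Y ez] : z.2 \in labels Y by rewrite -XY map_f.
  by rewrite (labels_inj uPQ (sX _ zX) (sY _ z'Y) ez).
have sP z : z \in P -> z \in P ++ Q by rewrite mem_cat => ->.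
have sP' z : z \in P' -> z \in P ++ Q by rewrite -memPQ mem_cat => ->.
apply: rotated_split_eq => //; first exact: map_uniq uPQ.
have eqPP' : labels P' =i labels P by move=> w; rewrite eqP'.
by move=> z; apply/idP/idP; [apply: (sub P P' sP sP' eqP') | apply: (sub P' P sP' sP eqPP')].
Qed.

Lemma region_move_exists (R : region) (v u : nat) :
  csorted ltn (labels R) -> v \in labels R -> u \in labels R -> v < u ->
  exists k x y sx sy A B, [/\ R = rot k ((x, sx) :: A ++ (y, sy) :: B),
    minn (last (y, sy) B).2 (last (x, sx) A).2 = v
    & maxn (last (y, sy) B).2 (last (x, sx) A).2 = u].
Proof.
move=> [N rotN sortN] vR uR vu.
(* Rotated to increasing labels, R reads F1 ++ F2 ++ F3 with labels <= v, in (v, u]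
   and > u; the wanted move has the arcs F2 and F3 ++ F1. *)
have [R' rotR' eR'] : exists2 R', rotated R R' & labels R' = N := rotated_map rotN.
have memN z : (z \in N) = (z \in labels R) by rewrite (perm_mem (rotated_perm rotN)).
set G := [seq e <- R' | v < e.2].
have sortG : pairwise ltn (labels G) by rewrite labels_filter eR' pairwise_filter.
set F1 := [seq e <- R' | e.2 <= v]; set F2 := [seq e <- G | e.2 <= u].
set F3 := [seq e <- G | u < e.2].
have labelsF1 : labels F1 = [seq z <- N | z <= v] by rewrite (labels_filter (leq^~ v)) eR'.
have lastF1 : last 0 (labels F1) = v by rewrite labelsF1 last_filter_leq ?memN.
have lastF2 : last 0 (labels F2) = u.
  by rewrite (labels_filter (leq^~ u)) last_filter_leq // labels_filter eR' mem_filter vu memN.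
have splitR' : R' = F1 ++ F2 ++ F3.
  have sortR' : pairwise ltn (map snd R') by rewrite -/(labels R') eR'.
  rewrite {1}(sorted_key_split v sortR') -/F1 -/G.
  by rewrite {1}(sorted_key_split u sortG).
have rotF : rotated (F2 ++ F3 ++ F1) R.
  apply: rotated_sym (rotated_trans rotR' _).
  by rewrite {1}splitR' [in X in rotated _ X]catA; apply: rotated_catC.
have vF1 : v \in labels F1 by rewrite labelsF1 mem_filter leqnn memN.
have nzF1 : F1 != [::] by apply/eqP => F10; rewrite F10 in vF1.
have nzF2 : F2 != [::] by apply/eqP => F20; rewrite F20 in lastF2; rewrite -lastF2 in vu.
have lastH : last 0 (labels (F3 ++ F1)) = v.
  by rewrite /labels map_cat last_cat0 -?/(labels F1) // -size_eq0 size_map size_eq0.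
have [k ->] := rotatedP rotF; clear splitR' rotF.
have nzH : F3 ++ F1 != [::] by case: (F3).
case: (F3 ++ F1) lastH nzH => [// | [y sy] B lastB _].
case: F2 nzF2 lastF2 => [// | [x sx] A _ lastA].
exists k, x, y, sx, sy, A, B.
by rewrite !last_snd lastA lastB; split=> //; lia.
Qed.

Definition state_labels (s : state) : seq nat := flatten (map labels s).

Definition good_state (s : state) :=
  uniq (state_labels s) /\ {in s, forall R, csorted ltn (labels R)}.

Definition parks_on (C a : seq nat) := parks C [seq x <- a | x \in C].

Definition parking_state (s : state) (a : seq nat) :=
  {subset a <= state_labels s} /\ {in s, forall R, parks_on (labels R) a}.

Lemma parks_on_perm (C C' a : seq nat) : perm_eq C C' -> parks_on C a -> parks_on C' a.
Proof.
move=> CC' [size_a count_a]; rewrite /parks_on -(eq_filter (perm_mem CC')).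
by split=> [|t]; rewrite -?(perm_size CC') -?(permP CC').
Qed.

Lemma filter_mem_filter (p : pred nat) C a :
  [seq x <- a | x \in filter p C] = filter p [seq x <- a | x \in C].
Proof. by rewrite -filter_predI; apply: eq_filter => x; rewrite mem_filter. Qed.

Lemma parks_on_window_split (C X Y : seq nat) (v u : nat) (a : seq nat) :
  window_split C X Y v u \/ window_split C Y X v u ->
  (parks_on X a /\ parks_on Y a) <->
  (parks_on (filter (window v u) C) a /\ parks_on (filter (predC (window v u)) C) a).
Proof.
case=> -[hW hC]; move: (hW) (hC); rewrite perm_sym => Wh; rewrite perm_sym => Ch.
- split=> -[parkX parkY].
    by split; [apply: parks_on_perm hW parkX | apply: parks_on_perm hC parkY].
  by split; [apply: parks_on_perm Wh parkX | apply: parks_on_perm Ch parkY].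
- split=> -[parkX parkY].
    by split; [apply: parks_on_perm hW parkY | apply: parks_on_perm hC parkX].
  by split; [apply: parks_on_perm Ch parkY | apply: parks_on_perm Wh parkX].
Qed.

Lemma window_split_parks_on_eq (C X Y X' Y' a : seq nat) (v u1 u2 : nat) :
  uniq C -> u1 \in C -> u2 \in C -> v < u1 -> v < u2 ->
  window_split C X Y v u1 \/ window_split C Y X v u1 ->
  window_split C X' Y' v u2 \/ window_split C Y' X' v u2 ->
  parks_on X a -> parks_on Y a -> parks_on X' a -> parks_on Y' a ->
  X =i X' \/ X =i Y'.
Proof.
move=> uniqC u1C u2C vu1 vu2 win1 win2 parkX parkY parkX' parkY'.
have [parkW1 _] := (parks_on_window_split a win1).1 (conj parkX parkY).
have [parkW2 _] := (parks_on_window_split a win2).1 (conj parkX' parkY').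
rewrite /parks_on !filter_mem_filter in parkW1 parkW2.
have sub_a : {subset [seq x <- a | x \in C] <= C} by move=> z; rewrite mem_filter => /andP[].
have eu := parks_window_uniq uniqC sub_a u1C u2C vu1 vu2 parkW1 parkW2; subst u2.
case: win1 => -[/perm_mem h1 /perm_mem h2]; case: win2 => -[/perm_mem h3 /perm_mem h4].
- by left=> z; rewrite h1 h3.
- by right=> z; rewrite h1 h3.
- by right=> z; rewrite h2 h4.
- by left=> z; rewrite h2 h4.
Qed.

Lemma parks_on_cons_notin (C : seq nat) (v : nat) (a : seq nat) :
  v \notin C -> parks_on C (v :: a) = parks_on C a.
Proof. by move=> vC; rewrite /parks_on /= (negbTE vC). Qed.

Lemma parks_on_nil (C : seq nat) : parks_on C [::] <-> size C <= 1.
Proof. by rewrite /parks_on /parks /=; case: C => [|? []]; split=> // -[]. Qed.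

Lemma state_labels_cat s1 s2 : state_labels (s1 ++ s2) = state_labels s1 ++ state_labels s2.
Proof. by rewrite /state_labels map_cat flatten_cat. Qed.

Lemma state_labels_cons R s : state_labels (R :: s) = labels R ++ state_labels s.
Proof. by []. Qed.

Lemma state_labels_mid s1 R s2 :
  perm_eq (state_labels (s1 ++ R :: s2)) (labels R ++ state_labels (s1 ++ s2)).
Proof. by rewrite !state_labels_cat state_labels_cons perm_catCA. Qed.

Lemma mem_state_labels (s : state) (R : region) (z : nat) :
  R \in s -> z \in labels R -> z \in state_labels s.
Proof. by move=> Rs zR; apply/flattenP; exists (labels R); rewrite ?map_f. Qed.

Lemma uniq_labels_mid s1 R s2 : uniq (state_labels (s1 ++ R :: s2)) -> uniq (labels R).
Proof. by rewrite (perm_uniq (state_labels_mid _ _ _)) cat_uniq => /and3P[]. Qed.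

Lemma labels_notin_mid (s1 : state) (R : region) (s2 : state) (R' : region) (z : nat) :
  uniq (state_labels (s1 ++ R :: s2)) ->
  R' \in s1 ++ s2 -> z \in labels R -> z \notin labels R'.
Proof.
rewrite (perm_uniq (state_labels_mid _ _ _)) cat_uniq => /and3P[_ /hasPn disj _] R's zR.
by apply/negP => zR'; have := disj z (mem_state_labels R's zR'); rewrite zR.
Qed.

Lemma mid_region_eq (s1 s2 t1 t2 : state) (R R' : region) (z : nat) :
  uniq (state_labels (s1 ++ R :: s2)) -> s1 ++ R :: s2 = t1 ++ R' :: t2 ->
  z \in labels R -> z \in labels R' ->
  [/\ s1 = t1, R = R' & s2 = t2].
Proof.
elim: s1 t1 => [|R1 s1 IH] [|R2 t1] /= uniq_s.
- by case=> -> ->.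
- case=> _ E zR zR'; have R's2 : R' \in s2 by rewrite E mem_cat mem_head orbT.
  by have := labels_notin_mid (s1 := [::]) uniq_s R's2 zR; rewrite zR'.
- case=> eR1 _ zR zR'; rewrite -eR1 in zR'.
  have Rs : R \in s1 ++ R :: s2 by rewrite mem_cat mem_head orbT.
  by have := labels_notin_mid (s1 := [::]) uniq_s Rs zR'; rewrite zR.
- case=> -> E zR zR'; move: uniq_s; rewrite /state_labels /= cat_uniq => /and3P[_ _ uniq_s].
  by case: (IH t1 uniq_s E zR zR') => -> -> ->.
Qed.

Lemma play_perm s s' l a : play s l a -> perm_eq s s' -> play s' l a.
Proof.
move=> p; elim: p s' => [s0 small | s1 s2 k x y sx sy A B l' a' _ IH] s' ss'.
  by apply: play_end; rewrite -(perm_all _ ss').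
set R := rot k _ in ss' *; set P := (joined x y, sx) :: A; set Q := (joined y x, sy) :: B.
have Rs' : R \in s' by rewrite -(perm_mem ss') mem_cat mem_head orbT.
move: ss'; case/splitPr: Rs' => t1 t2 ss'.
rewrite (permPl (perm_mid s1 s2 R)) (permPr (perm_mid t1 t2 R)) perm_cons in ss'.
apply/play_step/IH; rewrite (permPl (perm_mid s1 _ P)) (permPr (perm_mid t1 _ P)) perm_cons.
by rewrite (permPl (perm_mid s1 s2 Q)) (permPr (perm_mid t1 t2 Q)) perm_cons.
Qed.

Lemma play_nil_inv s l : play s l [::] -> l = [::].
Proof. by move E : [::] => a p; case: p E. Qed.

Lemma play_cons_inv s l v a : play s l (v :: a) ->
  exists s1 s2 k x y sx sy A B l', [/\ s = s1 ++ rot k ((x, sx) :: A ++ (y, sy) :: B) :: s2,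
    l = (x, y) :: l', v = minn (last (y, sy) B).2 (last (x, sx) A).2
    & play (s1 ++ ((joined x y, sx) :: A) :: ((joined y x, sy) :: B) :: s2) l' a].
Proof.
move E : (v :: a) => va p; case: p E => [// | s1 s2 k x y sx sy A B l' a' p [-> ->]].
by exists s1, s2, k, x, y, sx, sy, A, B, l'.
Qed.

Section Move.
Variables (k : nat) (x y : arm) (sx sy : nat) (A B : region).
Local Notation moved := (rot k ((x, sx) :: A ++ (y, sy) :: B)).
Local Notation left_arc := ((joined x y, sx) :: A).
Local Notation right_arc := ((joined y x, sy) :: B).
Local Notation move_min := (minn (last (y, sy) B).2 (last (x, sx) A).2).
Local Notation move_max := (maxn (last (y, sy) B).2 (last (x, sx) A).2).

Lemma rotated_labels_move : rotated (labels left_arc ++ labels right_arc) (labels moved).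
Proof. by rewrite /labels map_rot /= map_cat; apply: rotated_rot. Qed.

Lemma state_labels_move s1 s2 :
  perm_eq (state_labels (s1 ++ moved :: s2)) (state_labels (s1 ++ left_arc :: right_arc :: s2)).
Proof.
rewrite !state_labels_cat perm_cat2l !state_labels_cons catA perm_cat2r perm_sym.
exact: rotated_perm rotated_labels_move.
Qed.

Lemma good_state_move s1 s2 :
  good_state (s1 ++ moved :: s2) -> good_state (s1 ++ left_arc :: right_arc :: s2).
Proof.
case=> uniq_s cs_s; split; first by rewrite -(perm_uniq (state_labels_move s1 s2)).
have cs_arcs : csorted ltn (labels left_arc ++ labels right_arc).
  by apply: csorted_rotated (rotated_sym rotated_labels_move) _; apply: cs_s; rewrite mem_mid eqxx.
move=> R; rewrite !mem_mid => /predU1P[-> | /predU1P[-> | R12]].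
- exact: csorted_catl cs_arcs.
- exact: csorted_catr cs_arcs.
- by apply: cs_s; rewrite mem_mid R12 orbT.
Qed.

Lemma move_window_split : uniq (labels moved) -> csorted ltn (labels moved) ->
  [/\ move_min \in labels moved, move_max \in labels moved, move_min < move_max
    & window_split (labels moved) (labels left_arc) (labels right_arc) move_min move_max
      \/ window_split (labels moved) (labels right_arc) (labels left_arc) move_min move_max].
Proof.
move=> uniqC csC; rewrite !last_snd.
by move: (rotated_window_split (P := labels left_arc) (Q := labels right_arc) isT isT
  rotated_labels_move uniqC csC).
Qed.

Lemma parking_state_merge s1 s2 a : good_state (s1 ++ moved :: s2) ->
  parking_state (s1 ++ left_arc :: right_arc :: s2) a ->
  parking_state (s1 ++ moved :: s2) (move_min :: a).
Proof.
move=> [uniq_s cs_s] [sub_a park_a]; have Rs : moved \in s1 ++ moved :: s2 by rewrite mem_mid eqxx.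
have uniqC := uniq_labels_mid uniq_s.
have [vC uC vu win] := move_window_split uniqC (cs_s _ Rs).
have [parkW parkWC] : parks_on (filter (window move_min move_max) (labels moved)) a /\
    parks_on (filter (predC (window move_min move_max)) (labels moved)) a.
  by apply/(parks_on_window_split a win); split; apply: park_a; rewrite !mem_mid eqxx ?orbT.
split=> [z | R].
  rewrite inE => /predU1P[-> | za]; first exact: mem_state_labels Rs vC.
  by rewrite (perm_mem (state_labels_move _ _)) sub_a.
rewrite mem_mid => /predU1P[-> | R12].
  rewrite /parks_on /= vC; apply: (parks_merge vC uC vu).
  - by rewrite -filter_mem_filter.
  - by rewrite -filter_mem_filter.
rewrite parks_on_cons_notin ?(labels_notin_mid uniq_s R12 vC) //.
by apply: park_a; rewrite !mem_mid R12 !orbT.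
Qed.

Lemma parking_state_split s1 s2 a : good_state (s1 ++ moved :: s2) ->
  parking_state (s1 ++ moved :: s2) (move_min :: a) ->
  parks_on (filter (window move_min move_max) (labels moved)) a ->
  parks_on (filter (predC (window move_min move_max)) (labels moved)) a ->
  parking_state (s1 ++ left_arc :: right_arc :: s2) a.
Proof.
move=> [uniq_s cs_s] [sub_a park_a] parkW parkWC.
have Rs : moved \in s1 ++ moved :: s2 by rewrite mem_mid eqxx.
have [vC _ _ win] := move_window_split (uniq_labels_mid uniq_s) (cs_s _ Rs).
have [parkL parkR] := (parks_on_window_split a win).2 (conj parkW parkWC).
split=> [z za | R].
  by rewrite -(perm_mem (state_labels_move _ _)) sub_a // inE za orbT.
rewrite !mem_mid => /predU1P[-> // | /predU1P[-> // | R12]].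
rewrite -(parks_on_cons_notin _ (labels_notin_mid uniq_s R12 vC)).
by apply: park_a; rewrite mem_mid R12 orbT.
Qed.

End Move.

(** * Lines of play *)

Lemma play_parking_state s l a : play s l a -> good_state s -> parking_state s a.
Proof.
elim=> [s0 small _ | s1 s2 k x y sx sy A B l' a' _ IH good].
  by split=> // R /(allP small) R1; apply/parks_on_nil; rewrite size_map.
exact: parking_state_merge good (IH (good_state_move good)).
Qed.

Lemma parking_state_play s a : good_state s -> parking_state s a -> exists l, play s l a.
Proof.
elim: a s => [|v a IH] s good_s [sub_a park_a].
  by exists [::]; apply/play_end/allP => R /park_a /parks_on_nil; rewrite size_map.
have /flattenP[_ /mapP[R Rs ->] vR] := sub_a v (mem_head _ _).
case/splitPr: Rs good_s sub_a park_a => s1 s2 good_s sub_a park_a.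
have [uniq_s cs_s] := good_s; have Rs : R \in s1 ++ R :: s2 by rewrite mem_mid eqxx.
have parkR : parks (labels R) (v :: [seq x <- a | x \in labels R]).
  by have := park_a R Rs; rewrite /parks_on /= vR.
have [u [vu defu minu]] := parks_first_deficient parkR.
have [uR parkW parkWC] := parks_split (uniq_labels_mid uniq_s) vu minu defu parkR.
have [k [x [y [sx [sy [A [B [eR ev eu]]]]]]]] := region_move_exists (cs_s R Rs) vR uR vu.
subst R v u; rewrite -!filter_mem_filter in parkW parkWC.
have park_s' := parking_state_split good_s (conj sub_a park_a) parkW parkWC.
have [l pl] := IH _ (good_state_move good_s) park_s'.
by exists ((x, y) :: l); apply: play_step.
Qed.

Lemma move_determined k x y sx sy A B k' x' y' sx' sy' A' B' (a : seq nat) :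
  rot k ((x, sx) :: A ++ (y, sy) :: B) = rot k' ((x', sx') :: A' ++ (y', sy') :: B') ->
  uniq (labels (rot k ((x, sx) :: A ++ (y, sy) :: B))) ->
  csorted ltn (labels (rot k ((x, sx) :: A ++ (y, sy) :: B))) ->
  minn (last (y, sy) B).2 (last (x, sx) A).2 = minn (last (y', sy') B').2 (last (x', sx') A').2 ->
  parks_on (labels ((joined x y, sx) :: A)) a -> parks_on (labels ((joined y x, sy) :: B)) a ->
  parks_on (labels ((joined x' y', sx') :: A')) a ->
  parks_on (labels ((joined y' x', sy') :: B')) a ->
  (x, sx) :: A = (x', sx') :: A' /\ (y, sy) :: B = (y', sy') :: B' \/
  (x, sx) :: A = (y', sy') :: B' /\ (y, sy) :: B = (x', sx') :: A'.
Proof.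
move=> eR uniqC csC ev parkA parkB parkA' parkB'.
have [_ uC vu win] := move_window_split uniqC csC.
rewrite eR in uniqC csC; have [_ uC' vu' win'] := move_window_split uniqC csC.
rewrite -eR -ev in uC' vu' win'; rewrite -eR in uniqC.
have uniqL : uniq (labels ((x, sx) :: A ++ (y, sy) :: B)).
  by rewrite -(rot_uniq k) -map_rot.
have rotL : rotated ((x, sx) :: A ++ (y, sy) :: B) ((x', sx') :: A' ++ (y', sy') :: B').
  by apply: rotated_trans (rotated_rot k _) _; rewrite eR; apply/rotated_sym/rotated_rot.
have [eqA | eqB] := window_split_parks_on_eq uniqC uC uC' vu vu' win win' parkA parkB parkA' parkB'.
  left; apply: (rotated_arcs_eq (P := (x, sx) :: A) (Q := (y, sy) :: B)
    (P' := (x', sx') :: A') (Q' := (y', sy') :: B')) isT isT uniqL rotL eqA.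
right; apply: (rotated_arcs_eq (P := (x, sx) :: A) (Q := (y, sy) :: B)
  (P' := (y', sy') :: B') (Q' := (x', sx') :: A')) isT isT uniqL _ eqB.
exact: rotated_trans rotL (rotated_catC ((x', sx') :: A') ((y', sy') :: B')).
Qed.
Lemma play_same_line s l1 l2 a : good_state s -> play s l1 a -> play s l2 a -> same_line l1 l2.
Proof.
move=> good_s p1; elim: p1 good_s l2 => [s0 _ _ l2 /play_nil_inv -> // |].
move=> s1 s2 k x y sx sy A B l1' a' p1 IH good l2.
case/play_cons_inv=> [t1 [t2 [k' [x' [y' [sx' [sy' [A' [B' [l2' [es -> ev p2]]]]]]]]]]].
have good' := good; rewrite es in good'.
have [[uniq_s cs_s] [uniq_t cs_t]] := (good, good').
have [vC _ _ _] := move_window_split (uniq_labels_mid uniq_s) (cs_s _ (mem_mid_self _ _ _)).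
have [vC' _ _ _] := move_window_split (uniq_labels_mid uniq_t) (cs_t _ (mem_mid_self _ _ _)).
rewrite -ev in vC'; case: (mid_region_eq uniq_s es vC vC') => e1 eR e2; subst t1 t2.
have [_ park1] := play_parking_state p1 (good_state_move good).
have [_ park2] := play_parking_state p2 (good_state_move good').
have := move_determined eR (uniq_labels_mid uniq_s) (cs_s _ (mem_mid_self _ _ _)) ev
  (park1 _ (mem_mid_self _ _ _)) (park1 _ (mem_mid_next _ _ _ _))
  (park2 _ (mem_mid_self _ _ _)) (park2 _ (mem_mid_next _ _ _ _)).
case=> -[[ex esx eA] [ey esy eB]]; subst x' sx' A' y' sy' B'.
  by rewrite /same_line /= {1}/same_move eqxx; apply: IH (good_state_move good) _ p2.
rewrite /same_line /= {1}/same_move eqxx orbT; apply: IH (good_state_move good) _ _.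
exact: play_perm p2 (perm_swap_mid _ _ _ _).
Qed.

Lemma labels_init n : labels [seq (orig i, i) | i <- iota 1 n] = iota 1 n.
Proof. by rewrite /labels -map_comp map_id. Qed.

Lemma state_labels_init n : state_labels (init n) = iota 1 n.
Proof. by rewrite /state_labels /= cats0 labels_init. Qed.

Lemma good_state_init n : good_state (init n).
Proof.
split=> [|R]; first by rewrite state_labels_init iota_uniq.
rewrite inE => /eqP ->; rewrite labels_init; exists (iota 1 n); first exact: rotated_refl.
by rewrite -(sorted_pairwise ltn_trans) iota_ltn_sorted.
Qed.

Lemma parking_state_init n a : parking_state (init n.+1) a <-> parking_function n a.
Proof.
rewrite /parking_state state_labels_init.
have parks_init : {in init n.+1, forall R, parks_on (labels R) a} <-> parks_on (iota 1 n.+1) a.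
  split=> [/(_ _ (mem_head _ _)) | park R]; first by rewrite labels_init.
  by rewrite inE => /eqP ->; rewrite labels_init.
have parks_on_iota : {subset a <= iota 1 n.+1} ->
    parks_on (iota 1 n.+1) a <-> parking_function n a.
  move=> sub_a; rewrite /parks_on (all_filterP _); last by apply/allP.
  by apply: parks_iota; apply/allP => x /sub_a; rewrite mem_iota => /andP[].
split=> [[sub_a /parks_init] | pf]; first by move/(parks_on_iota sub_a).
have sub_a : {subset a <= iota 1 n.+1}.
  by case: pf => _ /allP a_in _ x /a_in; rewrite mem_iota; lia.
by split=> //; apply/parks_init/(parks_on_iota sub_a).
Qed.

Theorem theorem4 (n : nat) (hn : 2 <= n) :
  (forall (l1 l2 : seq (arm * arm)) (a : seq nat),
      play (init n) l1 a -> play (init n) l2 a -> same_line l1 l2) /\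
  (forall a : seq nat,
      (exists l : seq (arm * arm), play (init n) l a) <->
      parking_function n.-1 a).
Proof.
have good := good_state_init n.
split=> [l1 l2 a p1 p2 | a]; first exact: play_same_line good p1 p2.
rewrite -(parking_state_init n.-1 a) prednK ?(ltnW hn) //.
split=> [[l p] | ]; first exact: play_parking_state p good.
exact: parking_state_play good.
Qed.
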